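(* Let $l,m,N$ be positive integers with $m>l$, let $\boldsymbol{\sigma}\in\mathrm{ir}(l)$, and assume $m>\mathcal{L}$. Then there is a decoder $\mathcal{D}_{\boldsymbol\sigma}$ such that for every codeword $\mathbf{x}=B_1\boldsymbol\sigma B_2\boldsymbol\sigma\cdots\boldsymbol\sigma B_N\in\mathcal{C}_{\boldsymbol\sigma}$ and every $\mathbf{y}\in R(D^{*,\le 1}(\mathbf{x}))$, the output $\mathcal{D}_{\boldsymbol\sigma}(\mathbf{y})$ is one of the following: (i) a string $B'_1\boldsymbol\sigma B'_2\boldsymbol\sigma\cdots\boldsymbol\sigma B'_N$ with all $|B'_i|=m$ and $B'_i\neq B_i$ for at most two indices $i$; or (ii) a list of blocks $B'_1,\dots,B'_N$ together with a set $E\subseteq[N]$ of at most four indices marked as erased, such that $B'_i=B_i$ for all $i\notin E$.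
   Context: $\Sigma_q=\{0,\dots,q-1\}$, $q\ge3$; $[n]=\{1,\dots,n\}$. A tandem duplication of length $k$ transforms $\mathbf{u}\mathbf{v}\mathbf{w}$ with $|\mathbf{v}|=k$ into $\mathbf{u}\mathbf{v}\mathbf{v}\mathbf{w}$; a $\le3$-TD is one of length $1,2$ or $3$. $D^*(\mathbf{x})$ is the set of strings obtainable from $\mathbf{x}$ by finitely many (possibly zero) $\le3$-TDs. A string is irreducible if it has no substring $\mathbf{a}\mathbf{a}$ with $1\le|\mathbf{a}|\le3$; $\mathrm{ir}(n)$ is the set of irreducible strings of length $n$ over $\Sigma_q$. $R(\mathbf{x})$ denotes the unique irreducible $\mathbf{r}$ with $\mathbf{x}\in D^*(\mathbf{r})$, and $R(S)=\{R(\mathbf{y}):\mathbf{y}\in S\}$ for a set $S$. A substitution replaces one symbol by a different symbol of $\Sigma_q$. $D^{*,1}(\mathbf{x})$ is the set of strings obtainable from $\mathbf{x}$ by any number of $\le3$-TDs and exactly one substitution in any order, and $D^{*,\le1}(\mathbf{x})=D^*(\mathbf{x})\cup D^{*,1}(\mathbf{x})$. $\mathcal{L}$ is the smallest integer such that for every alphabet, every $\mathbf{x}$ and every $\mathbf{x}''\in D^{*,1}(\mathbf{x})$, $R(\mathbf{x}'')$ can be obtained from $R(\mathbf{x})$ by deleting a substring of length at most $\mathcal{L}$ and inserting a substring of length at most $\mathcal{L}$ in the same position (it is known that $\mathcal{L}\le17$). The code $\mathcal{C}_{\boldsymbol\sigma}$ (depending on $l,m,N,\boldsymbol\sigma$)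 consists of all strings $\mathbf{x}=B_1\boldsymbol\sigma B_2\boldsymbol\sigma\cdots\boldsymbol\sigma B_N$ such that $\mathbf{x}\in\mathrm{ir}(N(m+l)-l)$, each $B_i\in\mathrm{ir}(m)$, and for every $i\in[N]$ the string $\boldsymbol\sigma B_i\boldsymbol\sigma$ contains exactly two occurrences of $\boldsymbol\sigma$ (so $\mathbf{x}$ contains exactly $N-1$ occurrences of $\boldsymbol\sigma$). The blocks $B_i$ are called message blocks and $\boldsymbol\sigma$ the marker. *)

From mathcomp Require Import all_boot.
Set Implicit Arguments. Unset Strict Implicit. Unset Printing Implicit Defensive.

Section Strings.
Variable q : nat.
Definition word := seq 'I_q.

Definition tdup (k : nat) (x y : word) : Prop :=
  exists u v w : word, size v = k /\ x = u ++ v ++ w /\ y = u ++ v ++ v ++ w.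

Definition td3 (x y : word) : Prop := exists k, 1 <= k <= 3 /\ tdup k x y.

Inductive Dstar : word -> word -> Prop :=
| Dstar_refl x : Dstar x x
| Dstar_step x y z : td3 x y -> Dstar y z -> Dstar x z.

Definition irreducible (x : word) : Prop :=
  ~ (exists u a w : word, 1 <= size a <= 3 /\ x = u ++ a ++ a ++ w).

Definition ir (n : nat) (x : word) : Prop := irreducible x /\ size x = n.

(* r = R(x): r is the (unique) irreducible string with x \in D^*(r) *)
Definition IsRoot (r x : word) : Prop := irreducible r /\ Dstar r x.

Definition subst1 (x y : word) : Prop :=
  exists (u w : word) (a b : 'I_q), a != b /\ x = u ++ a :: w /\ y = u ++ b :: w.

Definition Dstar1 (x y : word) : Prop :=
  exists x1 x2, Dstar x x1 /\ subst1 x1 x2 /\ Dstar x2 y.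

Definition Dstar_le1 (x y : word) : Prop := Dstar x y \/ Dstar1 x y.

Definition in_RDle1 (x y : word) : Prop := exists z, Dstar_le1 x z /\ IsRoot y z.

Definition join (s : word) (Bs : seq word) : word :=
  match Bs with
  | [::] => [::]
  | B :: Bs' => B ++ flatten [seq s ++ B' | B' <- Bs']
  end.

Definition occ (s t : word) : nat :=
  count (fun i => take (size s) (drop i t) == s) (iota 0 (size t).+1).

Definition codeword (l m N : nat) (s : word) (Bs : seq word) : Prop :=
  [/\ size Bs = N,
      forall B, B \in Bs -> ir m B,
      ir (N * (m + l) - l) (join s Bs)
    & forall B, B \in Bs -> occ s (s ++ B ++ s) = 2].
End Strings.

Definition L_good (L : nat) : Prop :=
  forall (q : nat) (x x'' r r'' : word q),
    Dstar1 x x'' -> IsRoot r x -> IsRoot r'' x'' ->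
    exists u d d' w : word q,
      size d <= L /\ size d' <= L /\ r = u ++ d ++ w /\ r'' = u ++ d' ++ w.

Definition is_calL (L : nat) : Prop :=
  L_good L /\ forall L', L_good L' -> L <= L'.

From mathcomp Require Import all_boot zify.
Set Implicit Arguments. Unset Strict Implicit. Unset Printing Implicit Defensive.

(* Every y in R(D^{*,<=1}(x)) of an
      irreducible x is an "L-edit" of x: y is obtained by replacing a factor of
      length <= L by one of length <= L.  For y in R(D^{*,1}(x)) this is the
      definition of L_good; for y in R(D^*(x)) we embed the alphabet into one
      with two extra symbols c, d and append c to x: substituting c by d turns
      a duplication history into a D^{*,1} history, and the edit guaranteed by
      L_good restricts back to an edit of x and y.
   2. Codeword structure.  In B_1 s ... s B_N (blocks of length m, K = m+|s|)
      block i sits at position i*K and the i-th marker at i*K + m; since each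
      s B s contains exactly two occurrences of s, s occurs nowhere strictly
      inside a window (j*K, j*K + 2m) except at the marker position.
   3. Decoding.  With L < m the edit touches at most two consecutive blocks.
      If |y| = |x| the edit does not shift anything, so reading the blocks at
      their nominal positions errs in at most two blocks.  Otherwise let a be
      the first missing marker in y: blocks left of a-1 are read from the left
      end and blocks right of a+1 from the right end, and {a-1, a, a+1} is
      declared erased. *)

Definition window (T : Type) (p k : nat) (t : seq T) : seq T := take k (drop p t).

Section Windows.
Context {T : Type}.
Implicit Types u d w X Y t : seq T.

Lemma size_window p k t : p + k <= size t -> size (window p k t) = k.
Proof. by move=> h; rewrite /window size_takel // size_drop; lia. Qed.

Lemma window_full p k t : 0 < k -> size (window p k t) = k -> p + k <= size t.
Proof. by rewrite /window size_take size_drop; case: (ltnP k (size t - p)); lia. Qed.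

Lemma window_catl X Y p k : p + k <= size X -> window p k (X ++ Y) = window p k X.
Proof.
move=> h; rewrite /window drop_cat; case: ltnP => h2; last first.
  have -> : k = 0 by lia.
  by rewrite !take0.
by rewrite takel_cat // size_drop; lia.
Qed.

Lemma window_catr X Y p k : window (size X + p) k (X ++ Y) = window p k Y.
Proof. by rewrite /window addnC -drop_drop drop_size_cat. Qed.

Lemma window_before_edit u d (d' : seq T) w p k :
  p + k <= size u -> window p k (u ++ d ++ w) = window p k (u ++ d' ++ w).
Proof. by move=> h; rewrite !window_catl. Qed.

Lemma window_after_edit u d (d' : seq T) w p k : size u + size d <= p ->
  window p k (u ++ d ++ w) = window (p + size d' - size d) k (u ++ d' ++ w).
Proof.
move=> h; rewrite !catA.
have -> : p = size (u ++ d) + (p - size u - size d) by rewrite size_cat; lia.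
have -> : size (u ++ d) + (p - size u - size d) + size d' - size d
          = size (u ++ d') + (p - size u - size d) by rewrite !size_cat; lia.
by rewrite !window_catr.
Qed.
End Windows.

Definition edit_near (T : Type) (L : nat) (x y : seq T) : Prop :=
  exists u d d' w : seq T,
    size d <= L /\ size d' <= L /\ x = u ++ d ++ w /\ y = u ++ d' ++ w.

Lemma map_splitcat (T1 T2 : Type) (f : T1 -> T2) x U V :
  map f x = U ++ V -> exists x1 x2, [/\ x = x1 ++ x2, map f x1 = U & map f x2 = V].
Proof.
move=> h; exists (take (size U) x), (drop (size U) x); rewrite cat_take_drop.
by rewrite map_take map_drop h take_size_cat // drop_size_cat.
Qed.

Lemma edit_near_map (T1 T2 : Type) (f : T1 -> T2) L x y : injective f ->
  edit_near L (map f x) (map f y) -> edit_near L x y.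
Proof.
move=> inj_f [u [d [d' [w [hd [hd' [ex ey]]]]]]].
have [x1 [x23 [-> hx1 /map_splitcat [x2 [x3 [-> hx2 hx3]]]]]] := map_splitcat ex.
have [y1 [y23 [-> hy1 /map_splitcat [y2 [y3 [-> hy2 hy3]]]]]] := map_splitcat ey.
have -> : y1 = x1 by apply: (inj_map inj_f); rewrite hx1 hy1.
have -> : y3 = x3 by apply: (inj_map inj_f); rewrite hx3 hy3.
by exists x1, x2, y2, x3; rewrite -(size_map f x2) -(size_map f y2) hx2 hy2.
Qed.

Lemma edit_near_rcons (T : Type) L (x y : seq T) a b :
  edit_near L (rcons x a) (rcons y b) -> edit_near L x y.
Proof.
case=> u [d [d' [w [hd [hd' []]]]]].
case/lastP: w => [|w z]; last first.
  rewrite -!rcons_cat => /rcons_inj[-> _] /rcons_inj[-> _].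
  by exists u, d, d', w.
rewrite !cats0 => ex ey.
have sx : size x + 1 = size u + size d by rewrite addn1 -(size_rcons x a) ex size_cat.
have sy : size y + 1 = size u + size d' by rewrite addn1 -(size_rcons y b) ey size_cat.
pose k := minn (size u) (minn (size x) (size y)).
have prefix t e E : k <= size t -> rcons t e = u ++ E -> take k t = take k u.
  move=> kt et; rewrite -(@takel_cat _ _ t [:: e]) // cats1 et takel_cat //.
  by rewrite /k; lia.
have same_prefix : take k x = take k y.
  by rewrite (prefix x a d) ?(prefix y b d') //; rewrite /k; lia.
exists (take k x), (drop k x), (drop k y), [::].
rewrite !cats0 !size_drop {2}same_prefix !cat_take_drop /k.
by split; [lia | split; [lia | ]].
Qed.

Section Lifting.
Variables p q : nat.
Variable f : 'I_p -> 'I_q.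

Lemma Dstar_map (x z : word p) : Dstar x z -> Dstar (map f x) (map f z).
Proof.
elim=> [y|x0 y0 z0 [k [hk [u [v [w [hv [-> ->]]]]]]] _ IH]; first exact: Dstar_refl.
apply: Dstar_step IH; exists k; split=> //.
by exists (map f u), (map f v), (map f w); rewrite size_map !map_cat.
Qed.

Lemma irreducible_map (x : word p) : injective f -> irreducible x -> irreducible (map f x).
Proof.
move=> inj_f irr_x [U [A [W [hA /map_splitcat [u [r1 [ex _]]]]]]].
case/map_splitcat=> a1 [r2 [er1 ha1 /map_splitcat [a2 [w [er2 ha2 _]]]]].
have a12 : a1 = a2 by apply: (inj_map inj_f); rewrite ha1 ha2.
apply: irr_x; exists u, a1, w; rewrite ex er1 er2 -a12.
by rewrite -(size_map f) ha1.
Qed.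
End Lifting.

Lemma Dstar_catr q (x z e : word q) : Dstar x z -> Dstar (x ++ e) (z ++ e).
Proof.
elim=> [y|x0 y0 z0 [k [hk [u [v [w [hv [-> ->]]]]]]] _ IH]; first exact: Dstar_refl.
apply: Dstar_step IH; exists k; split=> //.
by exists u, v, (w ++ e); rewrite !catA.
Qed.

(* Appending a fresh symbol preserves irreducibility: a square ending at the
   last position would contain that symbol twice. *)
Lemma irreducible_rcons q (t : word q) c :
  irreducible t -> c \notin t -> irreducible (rcons t c).
Proof.
move=> irr_t c_fresh [U [A [W [hA]]]].
case/lastP: W => [|W z]; last first.
  rewrite !catA -rcons_cat -!catA => /rcons_inj[et _].
  by apply: irr_t; exists U, A, W.
case/lastP: A hA => [//|A a] _; rewrite cats0 -!rcons_cat => /rcons_inj[et ca].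
by move: c_fresh; rewrite et ca !mem_cat mem_rcons mem_head !orbT.
Qed.

(* Step 1 for duplications only: embed Sigma_q into Sigma_{q+2} and append a
   fresh symbol, which a substitution then changes into another fresh one. *)
Lemma edit_near_of_Dstar L q (x y z : word q) : L_good L ->
  irreducible x -> Dstar x z -> IsRoot y z -> edit_near L x y.
Proof.
move=> hL irr_x xz [irr_y yz].
pose f : 'I_q -> 'I_q.+2 := widen_ord (leqW (leqnSn q)).
have inj_f : injective f by move=> a b /(congr1 val) /= /val_inj.
pose c : 'I_q.+2 := Ordinal (leqW (ltnSn q)).
pose d : 'I_q.+2 := ord_max.
have fresh (t : word q) (e : 'I_q.+2) : q <= e -> e \notin map f t.
  by move=> he; apply/mapP=> -[a _ /(congr1 val) /=]; have := ltn_ord a; lia.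
have cd : c != d by apply/eqP=> /(congr1 val) /=; lia.
have lift_irr (t : word q) (e : 'I_q.+2) : q <= e -> irreducible t -> irreducible (rcons (map f t) e).
  by move=> he irr_t; apply: irreducible_rcons (fresh t e he); apply: irreducible_map.
have lift_D (t t' : word q) (e : 'I_q.+2) : Dstar t t' -> Dstar (rcons (map f t) e) (rcons (map f t') e).
  by move=> tt'; rewrite -!cats1; apply/Dstar_catr/Dstar_map.
have hist : Dstar1 (rcons (map f x) c) (rcons (map f z) d).
  exists (rcons (map f z) c), (rcons (map f z) d); split; first exact: lift_D.
  by split; [exists (map f z), [::], c, d; rewrite -!cats1 | exact: Dstar_refl].
apply: (edit_near_map inj_f); apply: (@edit_near_rcons _ _ _ _ c d).
exact: hL hist (conj (lift_irr _ c (leqnn q) irr_x) (Dstar_refl _))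
  (conj (lift_irr _ d (leqnSn q) irr_y) (lift_D _ _ _ yz)).
Qed.

Lemma edit_near_of_RDle1 L q (x y : word q) : L_good L ->
  irreducible x -> in_RDle1 x y -> edit_near L x y.
Proof.
move=> hL irr_x [z [[xz|xz] yz]]; first exact: edit_near_of_Dstar xz yz.
exact: hL xz (conj irr_x (Dstar_refl x)) yz.
Qed.

Lemma mul_block_lt a b K : a < b -> a * K + K <= b * K.
Proof. by move=> ab; rewrite addnC -mulSn leq_mul2r ab orbT. Qed.

Lemma occ_ge3 q (s B : word q) t : 0 < t < size s + size B ->
  window t (size s) (s ++ B ++ s) = s -> 3 <= occ s (s ++ B ++ s).
Proof.
move=> ht ho; rewrite /occ -size_filter.
have -> : 3 = size [:: 0; t; size s + size B] by [].
apply: uniq_leq_size.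
  rewrite /= !inE; apply/andP; split; first by apply/norP; split; apply/eqP; lia.
  by rewrite andbT; apply/eqP; lia.
move=> i; rewrite !inE mem_filter mem_iota !size_cat => /or3P [] /eqP ->.
- by rewrite drop0 take_size_cat //= eqxx; lia.
- by move: ho; rewrite /window => ->; rewrite eqxx /=; lia.
- by rewrite catA drop_size_cat ?size_cat // take_size eqxx /=; lia.
Qed.

Section Codeword.
Variables (q m : nat) (s : word q) (Bs : seq (word q)).
Hypothesis size_blocks : forall B, B \in Bs -> size B = m.
Local Notation K := (m + size s).

Lemma join_cons2 B B' rest : join s (B :: B' :: rest) = B ++ s ++ join s (B' :: rest).
Proof. by rewrite /join /= !catA. Qed.

Lemma join_suffix i : i < size Bs ->
  exists P, size P = i * K /\ join s Bs = P ++ join s (drop i Bs).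
Proof.
elim: i Bs size_blocks => [|i IH] [|B0 [|B1 rest]] sizes //= lt_i;
  try by exists [::].
have [P [sP eP]] := IH (B1 :: rest) (fun B hB => sizes B (@mem_behead _ [:: B0, B1 & rest] _ hB)) lt_i.
exists (B0 ++ s ++ P); rewrite -/(join s [:: B0, B1 & rest]) join_cons2 eP !catA; split=> //.
by rewrite !size_cat sP mulSn (sizes B0 (mem_head _ _)); lia.
Qed.

Lemma window_join_block i : i < size Bs -> window (i * K) m (join s Bs) = nth [::] Bs i.
Proof.
move=> lt_i; have [P [sP ->]] := join_suffix lt_i.
rewrite -sP -[size P]addn0 window_catr (drop_nth [::] lt_i) /window drop0 /=.
by rewrite take_size_cat // size_blocks // mem_nth.
Qed.

Lemma join_pair i : i.+1 < size Bs -> exists P R, size P = i * K /\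
  join s Bs = P ++ nth [::] Bs i ++ s ++ nth [::] Bs i.+1 ++ R.
Proof.
move=> lt_i; have [P [sP ->]] := join_suffix (ltnW lt_i).
rewrite (drop_nth [::] (ltnW lt_i)) (drop_nth [::] lt_i) join_cons2.
by exists P, (flatten [seq s ++ B' | B' <- drop i.+2 Bs]).
Qed.

Lemma window_join_marker i : i.+1 < size Bs ->
  window (i * K + m) (size s) (join s Bs) = s.
Proof.
move=> lt_i; have [P [R [sP ->]]] := join_pair lt_i.
rewrite -sP -(size_blocks (mem_nth [::] (ltnW lt_i))) window_catr.
by rewrite -[size (nth _ _ _)]addn0 window_catr /window drop0 take_size_cat.
Qed.

Hypothesis markers_two : forall B, B \in Bs -> occ s (s ++ B ++ s) = 2.

Lemma marker_unique j r : j.+1 < size Bs ->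
  j * K < r < j * K + m + m -> r != j * K + m ->
  window r (size s) (join s Bs) != s.
Proof.
move=> lt_j hr ne_r; have [P [R [sP ->]]] := join_pair lt_j.
have in_j := mem_nth [::] (ltnW lt_j); have in_j1 := mem_nth [::] lt_j.
have sz_j := size_blocks in_j; have sz_j1 := size_blocks in_j1.
apply/eqP => occ_r.
rewrite (_ : r = size P + (r - size P)) ?window_catr in occ_r; last by lia.
case: (ltnP r (j * K + m)) => hrm.
- suff : 3 <= occ s (s ++ nth [::] Bs j ++ s) by rewrite markers_two.
  apply: (occ_ge3 (t := size s + (r - size P))); first by rewrite sz_j; lia.
  rewrite window_catr -[RHS]occ_r catA (@window_catl _ (nth [::] Bs j ++ s)) //.
  by rewrite size_cat sz_j; lia.
- suff : 3 <= occ s (s ++ nth [::] Bs j.+1 ++ s) by rewrite markers_two.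
  apply: (occ_ge3 (t := r - size P - m)); first by rewrite sz_j1; lia.
  rewrite (_ : r - size P = size (nth [::] Bs j) + (r - size P - m)) in occ_r;
    last by rewrite sz_j; lia.
  rewrite window_catr catA window_catl in occ_r; last by rewrite size_cat sz_j1; lia.
  by rewrite catA window_catl // size_cat sz_j1; lia.
Qed.
End Codeword.

(* The index of the first of the N-1 marker positions at which y does not
   show s (N-1 if every marker is in place). *)
Definition first_bad_marker q m N (s y : word q) : nat :=
  find (fun j => window (j * (m + size s) + m) (size s) y != s) (iota 0 N.-1).

Definition decoder q m N (s y : word q) : (word q + (seq (word q) * {set 'I_N}))%type :=
  let K := m + size s in
  let n := N * K - size s in
  if size y == n then inl (join s [seq window (i * K) m y | i <- iota 0 N])
  else
    let a := first_bad_marker m N s y in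
    inr ([seq if i.+1 < a then window (i * K) m y else window (i * K + size y - n) m y
         | i <- iota 0 N],
         [set i : 'I_N | val i \in [:: a.-1; a; a.+1]]).

Section Decoding.
Variables (q m N : nat) (s : word q) (Bs : seq (word q)) (u d d' w : word q).
Hypothesis size_blocks : forall B, B \in Bs -> size B = m.
Hypothesis markers_two : forall B, B \in Bs -> occ s (s ++ B ++ s) = 2.
Hypothesis num_blocks : size Bs = N.
Hypothesis codeword_split : join s Bs = u ++ d ++ w.
Hypotheses (small_d : size d < m) (small_d' : size d' < m).
Local Notation K := (m + size s).
Local Notation y := (u ++ d' ++ w).

Lemma block_x i : i < N -> window (i * K) m (u ++ d ++ w) = nth [::] Bs i.
Proof. by rewrite -num_blocks -codeword_split; apply: window_join_block. Qed.

Lemma marker_x j : j.+1 < N -> window (j * K + m) (size s) (u ++ d ++ w) = s.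
Proof. by rewrite -num_blocks -codeword_split; apply: window_join_marker. Qed.

Lemma decode_same_length_size i : size d = size d' -> i < N ->
  size (window (i * K) m y) = m.
Proof.
move=> same lt_iN; apply: size_window.
have : size (window (i * K) m (u ++ d ++ w)) = m.
  by rewrite block_x // size_blocks // mem_nth // num_blocks.
move/(window_full (leq_ltn_trans (leq0n _) small_d)).
by rewrite !size_cat; lia.
Qed.

Lemma decode_same_length : size d = size d' ->
  forall i, i < N -> window (i * K) m y != nth [::] Bs i ->
  i \in [:: size u %/ K; (size u %/ K).+1].
Proof.
move=> same i lt_iN; rewrite -block_x //; apply: contraR; rewrite !inE negb_or.
have K_gt0 : 0 < K by lia.
have u_eq := divn_eq (size u) K; have u_mod := ltn_pmod (size u) K_gt0.
set Q := size u %/ K in u_eq u_mod *; clearbody Q.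
case/andP=> /eqP ne_Q /eqP ne_Q1; apply/eqP; case: (ltnP i Q) => [lt_iQ | le_Qi].
- rewrite (window_before_edit d' d) //; have := mul_block_lt K lt_iQ; lia.
- have lt_Qi : Q.+1 < i by lia.
  have := mul_block_lt K lt_Qi; rewrite mulSn => hi.
  rewrite (@window_after_edit _ u d' d) -?same; last by lia.
  by rewrite addnK.
Qed.

(* If the length changes, every marker strictly before the first missing one
   certifies that the blocks before it are unaffected by the edit: otherwise
   the marker would be a displaced occurrence of s inside the codeword. *)
Lemma decode_left i : size d != size d' ->
  i.+1 < first_bad_marker m N s y -> window (i * K) m y = nth [::] Bs i.
Proof.
move=> /eqP diff lt_ia; set a := first_bad_marker m N s y in lt_ia.
have a_le : a <= N.-1.
  by apply: leq_trans (find_size _ _) _; rewrite size_iota.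
have marker_y j : j < a -> window (j * K + m) (size s) y = s.
  move=> lt_ja; have := before_find 0 lt_ja.
  by rewrite nth_iota ?add0n; [move/negbFE/eqP | lia].
rewrite -block_x; last by lia.
case: (leqP (i * K + m) (size u)) => hu; first by rewrite (window_before_edit d' d).
have := marker_y i.+1 lt_ia.
rewrite (@window_after_edit _ u d' d) -?codeword_split; last by rewrite mulSn; lia.
move/eqP; apply: contraTeq => _.
apply: (@marker_unique _ m s Bs size_blocks markers_two i.+1).
- by rewrite num_blocks; lia.
- by rewrite mulSn; lia.
- by apply/eqP; lia.
Qed.

(* After the first missing marker a, the edit lies before block a+2, so the
   blocks from a+2 on are shifted by exactly |y| - |x|. *)
Lemma decode_right i : i < N -> (first_bad_marker m N s y).+2 <= i ->
  window (i * K + size y - size (u ++ d ++ w)) m y = nth [::] Bs i.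
Proof.
move=> lt_iN le_ai; set a := first_bad_marker m N s y in le_ai.
have has_bad : has (fun j => window (j * K + m) (size s) y != s) (iota 0 N.-1).
  by rewrite has_find size_iota -/(first_bad_marker m N s y) -/a; lia.
have := nth_find 0 has_bad; rewrite -/(first_bad_marker m N s y) -/a nth_iota ?add0n; last by lia.
move=> bad; have hu : size u < a * K + m + size s.
  rewrite ltnNge; apply/negP => hu; move: bad.
  by rewrite (window_before_edit d' d) ?marker_x ?eqxx //; lia.
have := mul_block_lt K le_ai; rewrite mulSn => hi.
rewrite -block_x // (@window_after_edit _ u d d' w); last by lia.
by congr window; rewrite !size_cat; lia.
Qed.
End Decoding.

Lemma count_iota_le (P : pred nat) N (S : seq nat) :
  (forall i, i < N -> P i -> i \in S) -> count P (iota 0 N) <= size S.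
Proof.
move=> inS; rewrite -size_filter; apply: uniq_leq_size; first exact/filter_uniq/iota_uniq.
by move=> i; rewrite mem_filter mem_iota => /andP[Pi /andP[_ lt_iN]]; apply: inS.
Qed.

Lemma card_ord_in N (S : seq nat) : #|[set i : 'I_N | val i \in S]| <= size S.
Proof.
rewrite cardsE cardE -(size_map val); apply: uniq_leq_size.
  by rewrite map_inj_uniq ?enum_uniq //; exact: val_inj.
by move=> k /mapP [i]; rewrite mem_enum => hi ->.
Qed.

Theorem theorem2 (q l m N : nat) (sigma : word q) :
  3 <= q -> 0 < l -> 0 < m -> 0 < N -> l < m -> ir l sigma ->
  (exists L, is_calL L /\ L < m) ->
  exists dec : word q -> (word q + (seq (word q) * {set 'I_N}))%type,
    forall Bs : seq (word q), codeword l m N sigma Bs ->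
    forall y : word q, in_RDle1 (join sigma Bs) y ->
      (exists Bs' : seq (word q),
          [/\ dec y = inl (join sigma Bs'),
              size Bs' = N,
              forall B', B' \in Bs' -> size B' = m
            & count (fun i => nth [::] Bs' i != nth [::] Bs i) (iota 0 N) <= 2])
      \/
      (exists (Bs' : seq (word q)) (E : {set 'I_N}),
          [/\ dec y = inr (Bs', E),
              size Bs' = N,
              #|E| <= 4
            & forall i : 'I_N, i \notin E -> nth [::] Bs' i = nth [::] Bs i]).
Proof.
move=> _ _ _ _ _ [_ <-] [L [[L_good_L _] L_lt_m]].
exists (decoder m N sigma) => Bs [num_blocks blocks_ir [x_irr x_size] markers_two] y.
have size_blocks B : B \in Bs -> size B = m by case/blocks_ir.
case/(edit_near_of_RDle1 L_good_L x_irr)=> [u [d [d' [w [hd [hd' [x_edit ->]]]]]]].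
have small_d : size d < m by lia.
have small_d' : size d' < m by lia.
rewrite x_edit in x_size; rewrite /decoder -x_size; case: eqP => [same_len | diff_len].
- have same : size d = size d' by move: same_len; rewrite !size_cat; lia.
  left; eexists; split; first reflexivity.
  + by rewrite size_map size_iota.
  + move=> B' /mapP [i]; rewrite mem_iota add0n => /andP[_ lt_iN] ->.
    exact: (decode_same_length_size size_blocks num_blocks x_edit small_d small_d').
  + pose Q := size u %/ (m + size sigma).
    apply: (@count_iota_le _ _ [:: Q; Q.+1]) => i lt_iN; rewrite (nth_map 0) ?size_iota // nth_iota //.
    exact: (decode_same_length size_blocks num_blocks x_edit small_d small_d').
- have diff : size d != size d' by apply/eqP=> same; apply: diff_len; rewrite !size_cat same.
  right; eexists; eexists; split; first reflexivity.
  + by rewrite size_map size_iota.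
  + exact: leq_trans (card_ord_in _ _) _.
  + move=> i; rewrite inE !inE => /norP [/eqP ne_a1 /norP [/eqP ne_a /eqP ne_a2]].
    rewrite (nth_map 0) ?size_iota // nth_iota // add0n.
    case: ifP => [lt_ia | /negbT ge_ia].
      exact: (decode_left size_blocks markers_two num_blocks x_edit small_d small_d' diff lt_ia).
    apply: (decode_right size_blocks num_blocks x_edit small_d small_d') => //.
    by move: ne_a1 ne_a ne_a2 ge_ia => /= *; lia.
Qed.
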